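(* For all graphs $G$ and $H$: $G$ and $H$ are distinguishable by EB-1WL if and only if they are distinguishable by $\mathrm{CFOC}^3$, i.e. there is a $\mathrm{CFOC}^3$ sentence $\phi$ with $G\models\phi$ and $H\not\models\phi$.
   Context: All graphs are finite, simple and undirected, without isolated vertices; $N(v)$ denotes the neighborhood of $v$. An ordered edge of $G=(V,E)$ is a pair $(u,v)$ with $\{u,v\}\in E$. EB-1WL coloring: $\mathrm{eb}^{(0)}(G,(u,v))=1$ for every ordered edge, and $\mathrm{eb}^{(\ell+1)}(G,(u,v)) = \big(\mathrm{eb}^{(\ell)}(G,(u,v)),\ \{\!\{\mathrm{eb}^{(\ell)}(G,(u,x)) : x\in N(u)\}\!\},\ \{\!\{(\mathrm{eb}^{(\ell)}(G,(u,y)),\mathrm{eb}^{(\ell)}(G,(v,y))) : y\in N(u)\cap N(v)\}\!\},\ \{\!\{\mathrm{eb}^{(\ell)}(G,(v,z)) : z\in N(v)\}\!\}\big)$. $\mathrm{eb}^{(\ell)}(G)$ is the multiset of $\mathrm{eb}^{(\ell)}(G,(u,v))$ over all ordered edges. Graphs are distinguishable by EB-1WL if they have different numbers of vertices or there is $\ell$ with $\mathrm{eb}^{(\ell)}(G)\neq\mathrm{eb}^{(\ell)}(H)$. Logic: first-order logic over the vocabulary with one binary relation $E$, where $E(x,y)$ holds of $(u,v)$ iff $\{u,v\}$ is an edge. For a tuple $\bar x=(x_1,\dots,x_n)$ of distinct variables, $\mathrm{clique}(\bar x):=\bigwedge_{1\le i<j\le n}E(x_i,x_j)$ (empty conjunction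 = true). CFOC (clique-based first-order logic with counting) is the smallest set of formulas such that: (1) $\mathrm{clique}(\bar x)$ is in CFOC for any tuple of distinct variables; (2) if $\phi(\bar x)\in$ CFOC then $\mathrm{clique}(\bar x)\wedge\neg\phi(\bar x)\in$ CFOC; (3) if $\phi(\bar x),\psi(\bar y)\in$ CFOC then $\mathrm{clique}(\bar z)\wedge(\phi(\bar x)\star\psi(\bar y))\in$ CFOC for $\star\in\{\wedge,\vee\}$, where $\bar z$ lists each variable of $\bar x$ and $\bar y$ exactly once; (4) if $\phi(\bar x,y)\in$ CFOC then $\mathrm{clique}(\bar x)\wedge\exists^{\ge k}y\,\phi(\bar x,y)\in$ CFOC for every integer $k\ge1$, where $\exists^{\ge k}y\,\phi$ means there are at least $k$ vertices $v$ such that $\phi$ holds with $y=v$. Here $\phi(\bar x)$ means the free variables of $\phi$ are exactly those in $\bar x$. $\mathrm{CFOC}^3$ consists of the CFOC formulas using at most three distinct variables; a sentence is a formula with no free variables. *)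

From mathcomp Require Import all_boot.
Set Implicit Arguments.
Unset Strict Implicit.
Unset Printing Implicit Defensive.

Definition simple_graph_noiso (T : finType) (e : rel T) : Prop :=
  symmetric e /\ irreflexive e /\ (forall v : T, exists w : T, e v w).

Definition nbhd (T : finType) (e : rel T) (v : T) : {set T} := [set w | e v w].

Definition oedges (T : finType) (e : rel T) : {set T * T} :=
  [set p : T * T | e p.1 p.2].

(* Colours: finite trees (a countable eqType). Multisets of colours are  *)
(* represented canonically as lists sorted by the (injective) pickle    *)
(* code, so two multisets are equal iff their encodings are equal.      *)

Definition color := GenTree.tree unit.

Definition col_le (a b : color) : bool := (pickle a <= pickle b)%N.

Definition col_one : color := GenTree.Node 0 [::].
Definition col_pair (a b : color) : color := GenTree.Node 1 [:: a; b].
Definition col_mset (s : seq color) : color := GenTree.Node 2 (sort col_le s).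
Definition col_tuple (c m1 m2 m3 : color) : color :=
  GenTree.Node 3 [:: c; m1; m2; m3].

(* EB-1WL colouring eb^(l)(G,(u,v)) (only meaningful on ordered edges) *)
Fixpoint eb (T : finType) (e : rel T) (l : nat) (u v : T) : color :=
  match l with
  | 0 => col_one
  | l'.+1 =>
      col_tuple (eb e l' u v)
        (col_mset [seq eb e l' u x | x <- enum (nbhd e u)])
        (col_mset [seq col_pair (eb e l' u y) (eb e l' v y)
                  | y <- enum (nbhd e u :&: nbhd e v)])
        (col_mset [seq eb e l' v z | z <- enum (nbhd e v)])
  end.

(* eb^(l)(G) : the multiset (as a list, compared up to permutation) *)
Definition ebG (T : finType) (e : rel T) (l : nat) : seq color :=
  [seq eb e l p.1 p.2 | p <- enum (oedges e)].

Definition EB_distinguishable (T1 T2 : finType) (e1 : rel T1) (e2 : rel T2)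
  : Prop :=
  #|T1| <> #|T2| \/ exists l : nat, ~~ perm_eq (ebG e1 l) (ebG e2 l).

Inductive fo : Type :=
| FE : nat -> nat -> fo
| FEq : nat -> nat -> fo
| FTrue : fo
| FNot : fo -> fo
| FAnd : fo -> fo -> fo
| FOr : fo -> fo -> fo
| FCnt : nat -> nat -> fo -> fo.   (* FCnt k y phi  =  exists^{>=k} y. phi *)

Fixpoint fv (f : fo) : seq nat :=
  match f with
  | FE x y => [:: x; y]
  | FEq x y => [:: x; y]
  | FTrue => [::]
  | FNot g => fv g
  | FAnd g h => fv g ++ fv h
  | FOr g h => fv g ++ fv h
  | FCnt _ y g => filter (predC1 y) (fv g)
  end.

Fixpoint vars (f : fo) : seq nat :=
  match f with
  | FE x y => [:: x; y]
  | FEq x y => [:: x; y]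
  | FTrue => [::]
  | FNot g => vars g
  | FAnd g h => vars g ++ vars h
  | FOr g h => vars g ++ vars h
  | FCnt _ y g => y :: vars g
  end.

Definition num_vars (f : fo) : nat := size (undup (vars f)).

Fixpoint bigAnd (s : seq fo) : fo :=
  match s with
  | [::] => FTrue
  | [:: a] => a
  | a :: s' => FAnd a (bigAnd s')
  end.

Fixpoint ordpairs (xs : seq nat) : seq (nat * nat) :=
  match xs with
  | [::] => [::]
  | x :: r => [seq (x, y) | y <- r] ++ ordpairs r
  end.

Definition clique (xs : seq nat) : fo :=
  bigAnd [seq FE p.1 p.2 | p <- ordpairs xs].

Inductive CFOC : fo -> Prop :=
| CFOC_clique (xs : seq nat) :
    uniq xs -> CFOC (clique xs)
| CFOC_neg (phi : fo) (xs : seq nat) :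
    CFOC phi -> uniq xs -> fv phi =i xs ->
    CFOC (FAnd (clique xs) (FNot phi))
| CFOC_and (phi psi : fo) (zs : seq nat) :
    CFOC phi -> CFOC psi -> uniq zs -> zs =i fv phi ++ fv psi ->
    CFOC (FAnd (clique zs) (FAnd phi psi))
| CFOC_or (phi psi : fo) (zs : seq nat) :
    CFOC phi -> CFOC psi -> uniq zs -> zs =i fv phi ++ fv psi ->
    CFOC (FAnd (clique zs) (FOr phi psi))
| CFOC_cnt (phi : fo) (xs : seq nat) (y : nat) (k : nat) :
    CFOC phi -> uniq (y :: xs) -> fv phi =i y :: xs -> (1 <= k)%N ->
    CFOC (FAnd (clique xs) (FCnt k y phi)).

Definition CFOC3 (f : fo) : Prop := CFOC f /\ (num_vars f <= 3)%N.

Definition sentence (f : fo) : Prop := fv f = [::].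

(* Semantics under a partial assignment (unassigned variables make
   atoms false; irrelevant for sentences, where every variable is bound
   before use). *)
Definition upd (T : Type) (a : nat -> option T) (x : nat) (v : T) :=
  fun z => if z == x then Some v else a z.

Fixpoint sat (T : finType) (e : rel T) (a : nat -> option T) (f : fo)
  : bool :=
  match f with
  | FE x y => if (a x, a y) is (Some u, Some v) then e u v else false
  | FEq x y => if (a x, a y) is (Some u, Some v) then u == v else false
  | FTrue => true
  | FNot g => ~~ sat e a g
  | FAnd g h => sat e a g && sat e a h
  | FOr g h => sat e a g || sat e a h
  | FCnt k y g => (k <= #|[pred v : T | sat e (upd a y v) g]|)%N
  end.

Definition models (T : finType) (e : rel T) (f : fo) : bool :=
  sat e (fun _ => None) f.

Definition CFOC3_distinguishable (T1 T2 : finType) (e1 : rel T1)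
  (e2 : rel T2) : Prop :=
  exists phi : fo, CFOC3 phi /\ sentence phi /\ models e1 phi /\
                   ~~ models e2 phi.

(* Soundness: every CFOC constructor is guarded by a clique on its free
   variables, so with three variables a counting quantifier ranges over all
   vertices, over the neighbours of one vertex, or over the common neighbours
   of an edge. Level l+1 EB colours determine the multisets of level l colours
   over exactly these ranges (for all vertices, dividing the edge count by the
   degree read off the colour), so by induction on the formula, assignments
   whose vertices and edges agree in EB colour up to the quantifier depth
   satisfy the same CFOC^3 formulas.
   Completeness: by induction on l one writes, with three variables, a formula
   stating that xy is an edge of EB colour c, counting for every colour d of
   the previous level the neighbours of x, the common neighbours of x and y,
   and the neighbours of y that realise d. If the colour multisets differ, some
   number of vertices having exactly m edges of colour c differs; if the sizes
   differ, the number of vertices does. Both are counted by a sentence. *)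

From mathcomp Require Import all_boot.
From Stdlib Require Import Classical.
From Stdlib Require List.

Set Implicit Arguments.
Unset Strict Implicit.
Unset Printing Implicit Defensive.

Lemma col_le_total : total col_le.
Proof. by move=> a b; rewrite /col_le leq_total. Qed.

Lemma col_le_trans : transitive col_le.
Proof. by move=> a b c; apply: leq_trans. Qed.

Lemma col_le_anti : antisymmetric col_le.
Proof.
move=> a b; rewrite /col_le -eqn_leq => /eqP/(congr1 (@unpickle color)).
by rewrite !pickleK => -[].
Qed.

Lemma col_mset_eq s t : (col_mset s = col_mset t) <-> perm_eq s t.
Proof.
have sortP := perm_sortP col_le_total col_le_trans col_le_anti.
by split=> [[/sortP]|/sortP eq_st] //; rewrite /col_mset eq_st.
Qed.

Lemma col_tuple_eq a b c d a' b' c' d' :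
  (col_tuple a b c d == col_tuple a' b' c' d') =
  [&& a == a', b == b', c == c' & d == d'].
Proof.
by apply/eqP/and4P => [[-> -> -> ->]|[/eqP-> /eqP-> /eqP-> /eqP->]]; rewrite ?eqxx.
Qed.

Lemma col_pair_eq a b a' b' :
  (col_pair a b == col_pair a' b') = (a == a') && (b == b').
Proof. by apply/eqP/andP => [[-> ->]|[/eqP-> /eqP->]]; rewrite ?eqxx. Qed.

(* For a multiset colour [col_mset s], [col_args] is [s] sorted. *)
Definition col_args (c : color) : seq color :=
  if c is GenTree.Node _ s then s else [::].

Definition col_arg (i : nat) (c : color) : color := nth col_one (col_args c) i.

Lemma perm_col_args s : perm_eq (col_args (col_mset s)) s.
Proof. by rewrite /= perm_sort. Qed.

Lemma eq_col_mset s t : (col_mset s == col_mset t) = perm_eq s t.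
Proof. by apply/eqP/idP => /col_mset_eq. Qed.

Lemma count_enum (T : finType) (A : {pred T}) (P : pred T) :
  count P (enum A) = #|[pred x in A | P x]|.
Proof.
rewrite -size_filter -(card_uniqP (filter_uniq P (enum_uniq A))).
by apply: eq_card => x; rewrite mem_filter mem_enum andbC.
Qed.

Lemma count_perm_map (A1 A2 C : eqType) (s1 : seq A1) (s2 : seq A2)
    (f1 : A1 -> C) (f2 : A2 -> C) (P1 : pred A1) (P2 : pred A2) :
  perm_eq (map f1 s1) (map f2 s2) ->
  (forall x1 x2, x1 \in s1 -> x2 \in s2 -> f1 x1 = f2 x2 -> P1 x1 = P2 x2) ->
  count P1 s1 = count P2 s2.
Proof.
move=> eq_f12 compat.
(* By [compat], [P1] and [P2] are determined by the colour; [Q] is the induced predicate. *)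
pose Q c := has (fun x => (f1 x == c) && P1 x) s1.
have Q1 : {in s1, P1 =1 Q \o f1}.
  move=> x xs /=; have /mapP[y ys fxy] : f1 x \in map f2 s2.
    by rewrite -(perm_mem eq_f12) map_f.
  apply/idP/hasP => [Px|[x' x's /andP[/eqP fx' Px']]]; first by exists x; rewrite ?eqxx.
  by rewrite (compat x y) // -(compat x' y) // fx'.
have Q2 : {in s2, P2 =1 Q \o f2}.
  move=> y ys /=; have /mapP[x xs fxy] : f2 y \in map f1 s1.
    by rewrite (perm_mem eq_f12) map_f.
  apply/idP/hasP => [Py|[x' x's /andP[/eqP fx' Px']]].
    by exists x; rewrite -?fxy ?eqxx ?(compat x y).
  by rewrite -(compat x' y) // fx'.
by rewrite (eq_in_count Q1) (eq_in_count Q2) -!count_map; apply/permP.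
Qed.

Lemma card_perm_map (T1 T2 : finType) (C : eqType) (P1 : pred T1) (P2 : pred T2)
    (S1 : {pred T1}) (S2 : {pred T2}) (f1 : T1 -> C) (f2 : T2 -> C) :
  {subset P1 <= S1} -> {subset P2 <= S2} ->
  perm_eq (map f1 (enum S1)) (map f2 (enum S2)) ->
  (forall x1 x2, x1 \in S1 -> x2 \in S2 -> f1 x1 = f2 x2 -> P1 x1 = P2 x2) ->
  #|P1| = #|P2|.
Proof.
move=> sub1 sub2 eq_f12 compat.
have card_in (T : finType) (P : pred T) (S : {pred T}) :
    {subset P <= S} -> #|P| = count P (enum S).
  move=> sPS; rewrite count_enum; apply: eq_card => x; rewrite !inE.
  by apply/idP/andP => [Px|[]//]; split => //; apply: sPS.
rewrite (card_in _ _ _ sub1) (card_in _ _ _ sub2).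
by apply: count_perm_map eq_f12 _ => x1 x2; rewrite !mem_enum; apply: compat.
Qed.

Lemma perm_eq_counts (A : Type) (C : eqType) (f : A -> C) (dom : seq A) (s1 s2 : seq C) :
  {subset s1 <= map f dom} -> {subset s2 <= map f dom} ->
  all (fun d => count_mem (f d) s1 == count_mem (f d) s2) dom = perm_eq s1 s2.
Proof.
move=> sub1 sub2; rewrite -(all_map f (fun c => count_mem c s1 == count_mem c s2)).
rewrite /perm_eq; apply/allP/allP => [same c|same c _].
  by rewrite mem_cat => /orP[/sub1|/sub2]; apply: same.
by have/permP-> : perm_eq s1 s2 by apply/allP.
Qed.

Lemma sat_bigAnd (T : finType) (e : rel T) a s : sat e a (bigAnd s) = all (sat e a) s.
Proof.
elim: s => [|f s IH] //; case: s IH => [|g s] IH; first by rewrite /= andbT.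
by rewrite [bigAnd _]/= [sat _ _ _]/= IH.
Qed.

Lemma fv_bigAnd s x : (x \in fv (bigAnd s)) = has (fun f => x \in fv f) s.
Proof.
elim: s => [|f s IH] //; case: s IH => [|g s] IH; first by rewrite /= orbF.
by rewrite [bigAnd _]/= [fv _]/= mem_cat IH.
Qed.

Lemma vars_bigAnd s x : (x \in vars (bigAnd s)) = has (fun f => x \in vars f) s.
Proof.
elim: s => [|f s IH] //; case: s IH => [|g s] IH; first by rewrite /= orbF.
by rewrite [bigAnd _]/= [vars _]/= mem_cat IH.
Qed.

Lemma ordpairs_mem xs p : p \in ordpairs xs -> (p.1 \in xs) && (p.2 \in xs).
Proof.
elim: xs => [|x r IH] //=; rewrite mem_cat => /orP[/mapP[y yr ->]|/IH/andP[r1 r2]].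
  by rewrite /= !inE eqxx yr orbT.
by rewrite !inE r1 r2 !orbT.
Qed.

Lemma ordpairs_neq xs p : uniq xs -> p \in ordpairs xs -> p.1 != p.2.
Proof.
elim: xs => [|x r IH] //= /andP[xr ur]; rewrite mem_cat => /orP[/mapP[y yr ->]|/IH -> //].
by apply: contraNneq xr => /= ->.
Qed.

Lemma ordpairs_total xs x y : uniq xs -> x \in xs -> y \in xs -> x != y ->
  ((x, y) \in ordpairs xs) || ((y, x) \in ordpairs xs).
Proof.
elim: xs => [|z r IH] //= /andP[zr ur]; rewrite !inE !mem_cat.
case/predU1P=> [->|xr] /predU1P[->|yr]; rewrite ?eqxx // => nxy.
- by rewrite (map_f (pair z) yr).
- by rewrite (map_f (pair z) xr) orbT.
- by case/orP: (IH ur xr yr nxy) => ->; rewrite !orbT.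
Qed.

Lemma fv_clique xs x : x \in fv (clique xs) -> x \in xs.
Proof.
rewrite fv_bigAnd has_map => /hasP[p /ordpairs_mem/andP[p1 p2]].
by rewrite !inE => /orP[]/eqP->.
Qed.

Lemma vars_clique xs x : x \in vars (clique xs) -> x \in xs.
Proof.
rewrite vars_bigAnd has_map => /hasP[p /ordpairs_mem/andP[p1 p2]].
by rewrite !inE => /orP[]/eqP->.
Qed.

Lemma fv_vars f : {subset fv f <= vars f}.
Proof.
move=> x; elim: f => //= [g IHg h IHh|g IHg h IHh|k y g IH]; rewrite ?mem_cat.
- by case/orP=> [/IHg|/IHh] ->; rewrite ?orbT.
- by case/orP=> [/IHg|/IHh] ->; rewrite ?orbT.
- by rewrite mem_filter in_cons => /andP[_ /IH ->]; rewrite orbT.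
Qed.

Lemma sat_clique_adj (T : finType) (e : rel T) a xs x y : symmetric e -> uniq xs ->
  sat e a (clique xs) -> x \in xs -> y \in xs -> x != y ->
  exists u v, [/\ a x = Some u, a y = Some v & e u v].
Proof.
move=> e_sym uxs; rewrite sat_bigAnd all_map => /allP sat_xs xxs yxs nxy.
have edge p : p \in ordpairs xs -> exists u v, [/\ a p.1 = Some u, a p.2 = Some v & e u v].
  move/sat_xs => /=; case: (a p.1) => [u|] //; case: (a p.2) => [v|] // euv.
  by exists u, v.
case/orP: (ordpairs_total uxs xxs yxs nxy) => /edge[u [v [au av euv]]].
  by exists u, v.
by exists v, u; rewrite e_sym.
Qed.

Lemma CFOC_sat_clique (T : finType) (e : rel T) a f : CFOC f -> sat e a f ->
  exists2 xs, uniq xs & {subset fv f <= xs} /\ sat e a (clique xs).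
Proof.
case=> [xs uxs|phi xs _ uxs fvE|phi psi xs _ _ uxs fvE|phi psi xs _ _ uxs fvE
       |phi xs y k _ /andP[yxs uxs] fvE _].
- by move=> sat_xs; exists xs => //; split => // x /fv_clique.
- move=> /andP[sat_xs _]; exists xs => //; split => // x.
  by rewrite [fv _]/= mem_cat fvE => /orP[/fv_clique|].
- move=> /andP[sat_xs _]; exists xs => //; split => // x.
  by rewrite [fv _]/= mem_cat -fvE => /orP[/fv_clique|].
- move=> /andP[sat_xs _]; exists xs => //; split => // x.
  by rewrite [fv _]/= mem_cat -fvE => /orP[/fv_clique|].
- move=> /andP[sat_xs _]; exists xs => //; split => // x.
  by rewrite [fv _]/= mem_cat mem_filter fvE in_cons => /orP[/fv_clique|/andP[/negbTE->]].
Qed.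

Lemma CFOC_sat_adj (T : finType) (e : rel T) a f x y : symmetric e -> CFOC f -> sat e a f ->
  x \in fv f -> y \in fv f -> x != y ->
  exists u v, [/\ a x = Some u, a y = Some v & e u v].
Proof.
move=> e_sym Cf /(CFOC_sat_clique Cf)[xs uxs [sub sat_xs]] /sub xxs /sub yxs.
exact: (sat_clique_adj e_sym uxs sat_xs).
Qed.

Lemma sat_upd_adj (T : finType) (e : rel T) a phi y w x u : symmetric e -> CFOC phi ->
  sat e (upd a y w) phi -> a x = Some u -> x \in fv phi -> y \in fv phi -> x != y -> e u w.
Proof.
move=> e_sym Cphi sat_phi au xphi yphi nxy.
have [u0 [w0 []]] := CFOC_sat_adj e_sym Cphi sat_phi xphi yphi nxy.
by rewrite /upd (negbTE nxy) eqxx au => -[<-] [<-].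
Qed.

Fixpoint qdepth (f : fo) : nat :=
  match f with
  | FNot g => qdepth g
  | FAnd g h | FOr g h => maxn (qdepth g) (qdepth h)
  | FCnt _ _ g => (qdepth g).+1
  | _ => 0
  end.

Lemma qdepth_clique xs : qdepth (clique xs) = 0.
Proof.
rewrite /clique; elim: (ordpairs xs) => [|p [|q s] IH] //=.
by rewrite IH.
Qed.

(* The colour EB-1WL implicitly gives a vertex [u] at level [l]: for every
   neighbour [v], it is the second component of [eb e l u v]. *)
Definition vcol (T : finType) (e : rel T) (l : nat) (u : T) : color :=
  if l is l'.+1 then col_mset [seq eb e l' u x | x <- enum (nbhd e u)] else col_one.

Section EbColours.
Variables (T T' : finType) (e : rel T) (e' : rel T').

Lemma eb_eq_down l u v u' v' :
  eb e l.+1 u v = eb e' l.+1 u' v' -> eb e l u v = eb e' l u' v'.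
Proof. exact: (congr1 (col_arg 0)). Qed.

Lemma eb_eq_vcol l u v u' v' : eb e l u v = eb e' l u' v' ->
  vcol e l u = vcol e' l u' /\ vcol e l v = vcol e' l v'.
Proof.
by case: l => [//|l] E; split; [apply: (congr1 (col_arg 1) E)|apply: (congr1 (col_arg 3) E)].
Qed.

Lemma vcol_eq_down l u u' : vcol e l.+1 u = vcol e' l.+1 u' -> vcol e l u = vcol e' l u'.
Proof.
case: l => [//|l] /col_mset_eq/(perm_map (col_arg 0)) E; apply/col_mset_eq.
by rewrite -!map_comp in E.
Qed.

Lemma eb_eq_flip l u v u' v' : eb e l u v = eb e' l u' v' -> eb e l v u = eb e' l v' u'.
Proof.
elim: l u v u' v' => [//|l IH] u v u' v' E.
have E0 := congr1 (col_arg 0) E; have E1 := congr1 (col_arg 1) E.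
have E2 := congr1 (col_arg 2) E; have E3 := congr1 (col_arg 3) E.
rewrite /col_arg /= in E0 E1 E2 E3.
rewrite /= (IH _ _ _ _ E0) E1 E3 setIC [nbhd e' v' :&: _]setIC; congr col_tuple.
pose swap c := if c is GenTree.Node 1 [:: a; b] then col_pair b a else c.
move/col_mset_eq/(perm_map swap): E2; rewrite -!map_comp => E2.
exact/col_mset_eq.
Qed.

End EbColours.

Section Invariance.
Variables (T1 T2 : finType) (e1 : rel T1) (e2 : rel T2).
Hypotheses (e1_sym : symmetric e1) (e2_sym : symmetric e2).

(* [a] and [b] cannot be told apart on the variables [X] by [l] rounds of EB-1WL. *)
Definition agree l (a : nat -> option T1) (b : nat -> option T2) (X : seq nat) : Prop :=
  (forall x, x \in X ->
     exists u v, [/\ a x = Some u, b x = Some v & vcol e1 l u = vcol e2 l v]) /\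
  (forall x y u v u' v', x \in X -> y \in X -> x != y ->
     a x = Some u -> a y = Some v -> b x = Some u' -> b y = Some v' ->
     e1 u v = e2 u' v' /\ (e1 u v -> eb e1 l u v = eb e2 l u' v')).

Lemma agree_sub l a b X Y : agree l a b X -> {subset Y <= X} -> agree l a b Y.
Proof.
move=> [agree_v agree_e] sYX; split=> [x /sYX|x y u v u' v' /sYX xX /sYX yX].
  exact: agree_v.
exact: agree_e.
Qed.

Lemma agree_down l a b X : agree l.+1 a b X -> agree l a b X.
Proof.
move=> [agree_v agree_e]; split=> [x /agree_v[u [v [au bv E]]]|x y u v u' v' xX yX nxy au av bu bv].
  by exists u, v; split=> //; apply: vcol_eq_down.
have [-> E] := agree_e _ _ _ _ _ _ xX yX nxy au av bu bv.
by split=> // /E/eb_eq_down.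
Qed.

Lemma agree_upd l a b xs y w w' : agree l a b xs -> y \notin xs ->
  vcol e1 l w = vcol e2 l w' ->
  (forall x u u', x \in xs -> a x = Some u -> b x = Some u' ->
     e1 u w = e2 u' w' /\ (e1 u w -> eb e1 l u w = eb e2 l u' w')) ->
  agree l (upd a y w) (upd b y w') (y :: xs).
Proof.
move=> [agree_v agree_e] yxs Ew new_e; split=> [x|x z u v u' v'].
  by rewrite in_cons /upd; case: eqP => [_ _|_ /agree_v]; first by exists w, w'.
rewrite !in_cons /upd; case: (eqVneq x y) => [->|nxy]; case: (eqVneq z y) => [->|nzy] //=.
- move=> _ zxs _ [<-] az [<-] bz; have [Ee Eeb] := new_e _ _ _ zxs az bz.
  by rewrite e1_sym e2_sym; split=> // /Eeb/eb_eq_flip.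
- by move=> xxs _ _ ax [<-] bx [<-]; exact: (new_e _ _ _ xxs ax bx).
- by move=> xxs zxs; apply: agree_e.
Qed.

Lemma sat_clique_agree l a b xs : uniq xs -> agree l a b (fv (clique xs)) ->
  sat e1 a (clique xs) = sat e2 b (clique xs).
Proof.
move=> uxs [agree_v agree_e]; rewrite !sat_bigAnd !all_map; apply: eq_in_all => p pxs /=.
have p1 : p.1 \in fv (clique xs).
  by rewrite fv_bigAnd has_map; apply/hasP; exists p; rewrite //= inE eqxx.
have p2 : p.2 \in fv (clique xs).
  by rewrite fv_bigAnd has_map; apply/hasP; exists p; rewrite //= !inE eqxx orbT.
have [u [u' [au bu _]]] := agree_v _ p1; have [v [v' [av bv _]]] := agree_v _ p2.
rewrite au bu av bv.
by have [] := agree_e _ _ _ _ _ _ p1 p2 (ordpairs_neq uxs pxs) au av bu bv.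
Qed.

Hypothesis vcol_perm :
  forall l, perm_eq (map (vcol e1 l) (enum T1)) (map (vcol e2 l) (enum T2)).

Section Counting.
Variables (l : nat) (phi : fo) (y : nat) (a : nat -> option T1) (b : nat -> option T2).
Hypothesis phiC : CFOC phi.
Hypothesis sat_phi_agree :
  forall a' b', agree l a' b' (fv phi) -> sat e1 a' phi = sat e2 b' phi.

Lemma sat_upd_agree xs w w' : fv phi =i y :: xs ->
  agree l (upd a y w) (upd b y w') (y :: xs) ->
  sat e1 (upd a y w) phi = sat e2 (upd b y w') phi.
Proof. by move=> fvE /agree_sub A; apply/sat_phi_agree/A => x; rewrite fvE. Qed.

Lemma card_sat_upd0 : fv phi =i [:: y] ->
  #|[pred w | sat e1 (upd a y w) phi]| = #|[pred w | sat e2 (upd b y w) phi]|.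
Proof.
move=> fvE; apply: (card_perm_map (S1 := T1) (S2 := T2) _ _ (vcol_perm l)) => // w w' _ _ Ew.
by apply: (sat_upd_agree fvE); apply: agree_upd.
Qed.

Lemma card_sat_upd1 x : x != y -> fv phi =i [:: y; x] -> agree l.+1 a b [:: x] ->
  #|[pred w | sat e1 (upd a y w) phi]| = #|[pred w | sat e2 (upd b y w) phi]|.
Proof.
move=> nxy fvE A; have [u [u' [au bu /col_mset_eq Eu]]] := A.1 x (mem_head _ _).
have [xphi yphi] : x \in fv phi /\ y \in fv phi by rewrite !fvE !inE !eqxx orbT.
apply: (card_perm_map (S1 := nbhd e1 u) (S2 := nbhd e2 u') _ _ Eu) => w.
- by rewrite !inE => /(sat_upd_adj e1_sym phiC)/(_ au xphi yphi nxy).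
- by rewrite !inE => /(sat_upd_adj e2_sym phiC)/(_ bu xphi yphi nxy).
move=> w'; rewrite !inE => euw euw' Eeb; apply: (sat_upd_agree fvE).
apply: agree_upd (agree_down A) _ (eb_eq_vcol Eeb).2 _; first by rewrite inE eq_sym.
by move=> z v v'; rewrite inE => /eqP->; rewrite au bu => -[<-] [<-]; rewrite euw euw'.
Qed.

Lemma card_sat_upd2 x1 x2 : uniq [:: y; x1; x2] -> fv phi =i [:: y; x1; x2] ->
  agree l.+1 a b [:: x1; x2] -> sat e1 a (clique [:: x1; x2]) ->
  #|[pred w | sat e1 (upd a y w) phi]| = #|[pred w | sat e2 (upd b y w) phi]|.
Proof.
rewrite /= !inE !negb_or andbT !(eq_sym y) => /andP[/andP[n1y n2y] n12] fvE A.
have [x1X x2X] : x1 \in [:: x1; x2] /\ x2 \in [:: x1; x2] by rewrite !inE !eqxx orbT.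
have [x1phi x2phi yphi] : [/\ x1 \in fv phi, x2 \in fv phi & y \in fv phi].
  by rewrite !fvE !inE !eqxx !orbT.
have [u1 [u1' [au1 bu1 _]]] := A.1 x1 x1X; have [u2 [u2' [au2 bu2 _]]] := A.1 x2 x2X.
rewrite /= au1 au2 => e12.
have [_ /(_ e12) Eeb] := A.2 _ _ _ _ _ _ x1X x2X n12 au1 au2 bu1 bu2.
have /col_mset_eq Ecommon := congr1 (col_arg 2) Eeb.
apply: (card_perm_map (S1 := nbhd e1 u1 :&: nbhd e1 u2)
          (S2 := nbhd e2 u1' :&: nbhd e2 u2') _ _ Ecommon) => w.
- rewrite !inE => sat_w.
  by rewrite (sat_upd_adj e1_sym phiC sat_w au1) ?(sat_upd_adj e1_sym phiC sat_w au2).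
- rewrite !inE => sat_w.
  by rewrite (sat_upd_adj e2_sym phiC sat_w bu1) ?(sat_upd_adj e2_sym phiC sat_w bu2).
move=> w'; rewrite !inE => /andP[e1w e2w] /andP[e1w' e2w'].
move/eqP; rewrite col_pair_eq => /andP[/eqP E1 /eqP E2]; apply: (sat_upd_agree fvE).
apply: agree_upd (agree_down A) _ (eb_eq_vcol E1).2 _.
  by rewrite !inE negb_or !(eq_sym y) n1y n2y.
move=> z v v'; rewrite !inE => /orP[]/eqP->.
  by rewrite au1 bu1 => -[<-] [<-]; rewrite e1w e1w'.
by rewrite au2 bu2 => -[<-] [<-]; rewrite e2w e2w'.
Qed.

Lemma card_sat_upd xs : uniq (y :: xs) -> fv phi =i y :: xs -> size xs <= 2 ->
  agree l.+1 a b xs -> sat e1 a (clique xs) ->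
  #|[pred w | sat e1 (upd a y w) phi]| = #|[pred w | sat e2 (upd b y w) phi]|.
Proof.
case: xs => [|x1 [|x2 [|//]]] uxs fvE _ A sat_xs.
- exact: card_sat_upd0.
- by apply: card_sat_upd1 fvE A; move: uxs; rewrite /= inE eq_sym => /andP[].
- exact: (card_sat_upd2 uxs fvE A sat_xs).
Qed.

End Counting.

Lemma agree_FAnd l a b g h :
  agree l a b (fv (FAnd g h)) -> agree l a b (fv g) /\ agree l a b (fv h).
Proof. by move/agree_sub=> A; split; apply: A => x /= xf; rewrite mem_cat xf ?orbT. Qed.

Theorem sat_agree f : CFOC f -> forall vs, size vs <= 3 -> {subset vars f <= vs} ->
  forall l, qdepth f <= l -> forall a b, agree l a b (fv f) -> sat e1 a f = sat e2 b f.
Proof.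
elim=> [xs uxs|phi xs _ IH uxs _|phi psi xs _ IH1 _ IH2 uxs _|phi psi xs _ IH1 _ IH2 uxs _
       |phi xs y k Cphi IH /[dup] uyxs /andP[yxs uxs] fvE _] vs vs3 sub l dl a b A.
- exact: (sat_clique_agree uxs A).
all: case/agree_FAnd: A => Ac A; rewrite [sat _ _ _]/= [sat e2 _ _]/= -(sat_clique_agree uxs Ac).
all: rewrite /= qdepth_clique max0n in dl.
all: move: sub => /= sub; have {}sub := fun x xf => sub x (mem_subseq (suffix_subseq _ _) xf).
2,3: case/agree_FAnd: A => A1 A2; move: dl; rewrite geq_max => /andP[dl1 dl2];
  have sub1 := fun x xf => sub x (mem_subseq (prefix_subseq _ _) xf);
  have sub2 := fun x xf => sub x (mem_subseq (suffix_subseq _ _) xf);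
  by rewrite (IH1 vs vs3 sub1 l dl1 a b A1) (IH2 vs vs3 sub2 l dl2 a b A2).
- by rewrite (IH vs vs3 sub l dl a b A).
- case: l dl Ac A => [//|l] dl _ A; case: (boolP (sat e1 a (clique xs))) => //= sat_xs.
  have {}sub x : x \in vars phi -> x \in vs by move=> xf; apply: sub; rewrite in_cons xf orbT.
  rewrite (@card_sat_upd l phi y a b Cphi (IH vs vs3 sub l dl) xs uyxs fvE) //.
  + rewrite -ltnS; apply: leq_trans vs3; apply: uniq_leq_size uyxs _ => x.
    by rewrite -fvE => /fv_vars/sub.
  + apply: (agree_sub A) => x xxs; rewrite /= mem_filter fvE in_cons xxs orbT andbT.
    by apply: contraNneq yxs => <-.
Qed.

End Invariance.

Lemma count_oedges (T : finType) (e : rel T) (P : T -> T -> bool) :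
  count (fun p => P p.1 p.2) (enum (oedges e)) = \sum_u #|[pred w | e u w && P u w]|.
Proof.
rewrite count_enum -sum1_card.
transitivity (\sum_u \sum_(w | e u w && P u w) 1); last by apply: eq_bigr => u _; rewrite sum1_card.
by rewrite pair_big_dep; apply: eq_bigl => p; rewrite !inE.
Qed.

(* A vertex [u] is the first endpoint of exactly [deg u] ordered edges, and
   [deg u] can be read off its colour as the size of the neighbour multiset. *)
Lemma count_vcol_ebG (T : finType) (e : rel T) l c :
  count_mem c (map (vcol e l.+1) (enum T)) * size (col_args c) =
  count (fun d => col_arg 1 d == c) (ebG e l.+1).
Proof.
rewrite /ebG count_map (count_oedges e (fun u _ => vcol e l.+1 u == c)).
rewrite (eq_bigr (fun u => (vcol e l.+1 u == c) * size (col_args c))); last first.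
  move=> u _; case: eqP => [<-|_]; last by rewrite mul0n; apply: eq_card0 => w; rewrite !inE andbF.
  by rewrite mul1n /= size_sort size_map -cardE; apply: eq_card => w; rewrite !inE andbT.
by rewrite -big_distrl /= -big_mkcond sum1_card count_map count_enum.
Qed.

Lemma perm_eq_vcol (T1 T2 : finType) (e1 : rel T1) (e2 : rel T2) :
  (forall v, exists w, e1 v w) -> (forall v, exists w, e2 v w) ->
  #|T1| = #|T2| -> (forall l, perm_eq (ebG e1 l) (ebG e2 l)) ->
  forall l, perm_eq (map (vcol e1 l) (enum T1)) (map (vcol e2 l) (enum T2)).
Proof.
move=> noiso1 noiso2 card12 eb12 [|l].
  have vcol0 (T : finType) (e : rel T) : map (vcol e 0) (enum T) = nseq #|T| col_one.
    by rewrite cardE; elim: (enum T) => //= u s ->.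
  by rewrite !vcol0 card12.
have size_vcol (T : finType) (e : rel T) c : (forall v, exists w, e v w) ->
    c \in map (vcol e l.+1) (enum T) -> 0 < size (col_args c).
  move=> noiso /mapP[u _ ->]; rewrite /= size_sort size_map -cardE.
  by have [w euw] := noiso u; apply/card_gt0P; exists w; rewrite inE.
apply/allP => c _; apply/eqP.
have E := count_vcol_ebG e1 l c; rewrite (permP (eb12 l.+1)) -count_vcol_ebG in E.
have [c0|c_pos] := posnP (size (col_args c)); last by apply/eqP; rewrite -(eqn_pmul2r c_pos) E.
have /count_memPn-> : c \notin map (vcol e1 l.+1) (enum T1).
  by apply/negP => /(size_vcol _ _ _ noiso1); rewrite c0.
have /count_memPn-> // : c \notin map (vcol e2 l.+1) (enum T2).
by apply/negP => /(size_vcol _ _ _ noiso2); rewrite c0.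
Qed.

Theorem CFOC3_distinguishable_EB (T1 T2 : finType) (e1 : rel T1) (e2 : rel T2) :
  simple_graph_noiso e1 -> simple_graph_noiso e2 ->
  CFOC3_distinguishable e1 e2 -> EB_distinguishable e1 e2.
Proof.
move=> [sym1 [_ noiso1]] [sym2 [_ noiso2]] [phi [[Cphi phi3] [phi_sen [m1 m2]]]].
case: (eqVneq #|T1| #|T2|) => [card12|/eqP]; last by left.
case: (classic (exists l, ~~ perm_eq (ebG e1 l) (ebG e2 l))) => [|nEB]; first by right.
have eb12 l : perm_eq (ebG e1 l) (ebG e2 l) by apply/negPn/negP => ?; apply: nEB; exists l.
have vcol12 := perm_eq_vcol noiso1 noiso2 card12 eb12.
have agree_none : agree e1 e2 (qdepth phi) (fun _ => None) (fun _ => None) (fv phi).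
  by rewrite phi_sen.
have sub : {subset vars phi <= undup (vars phi)} by move=> x; rewrite mem_undup.
have := sat_agree sym1 sym2 vcol12 Cphi phi3 sub (leqnn _) agree_none.
by rewrite -/(models e1 phi) -/(models e2 phi) (negbTE m2) m1.
Qed.

Definition cfoc_not xs phi := FAnd (clique xs) (FNot phi).
Definition cfoc_and xs phi psi := FAnd (clique xs) (FAnd phi psi).
Definition cfoc_cnt xs k y phi := FAnd (clique xs) (FCnt k y phi).
Definition cfoc_exactly xs m y phi :=
  if m is _.+1 then cfoc_and xs (cfoc_cnt xs m y phi) (cfoc_not xs (cfoc_cnt xs m.+1 y phi))
  else cfoc_not xs (cfoc_cnt xs 1 y phi).
Definition cfoc_all xs fs := foldr (cfoc_and xs) (clique xs) fs.

Definition V3 : seq nat := [:: 0; 1; 2].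

Definition cfoc3 (xs : seq nat) (f : fo) : Prop :=
  [/\ CFOC f, fv f =i xs & {subset vars f <= V3}].

Lemma cfoc3_eq_fv X Y f : cfoc3 X f -> X =i Y -> cfoc3 Y f.
Proof. by case=> Cf fvE sub XY; split=> // x; rewrite fvE XY. Qed.

Lemma cfoc3_clique2 x y : x != y -> x \in V3 -> y \in V3 -> cfoc3 [:: x; y] (clique [:: x; y]).
Proof.
move=> nxy xV yV; split=> [||z]; first by apply: CFOC_clique; rewrite /= inE nxy.
  by [].
by move=> /vars_clique /predU1P[->|/predU1P[->|]].
Qed.

Lemma mem_cat_sub (T : eqType) (X Y : seq T) x : {subset X <= Y} -> (x \in X ++ Y) = (x \in Y).
Proof. by move=> sXY; rewrite mem_cat; apply/orP/idP => [[/sXY|]|->] //; right. Qed.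

Lemma cfoc3_not xs phi : uniq xs -> {subset xs <= V3} -> cfoc3 xs phi -> cfoc3 xs (cfoc_not xs phi).
Proof.
move=> uxs xsV [Cphi fvE sub]; split=> [|x|x]; first exact: CFOC_neg.
  by rewrite /= mem_cat fvE -mem_cat mem_cat_sub //; apply: fv_clique.
by rewrite /= mem_cat => /orP[/vars_clique/xsV|/sub].
Qed.

Lemma cfoc3_and xs X Y phi psi : uniq xs -> {subset xs <= V3} ->
  cfoc3 X phi -> cfoc3 Y psi -> xs =i X ++ Y -> cfoc3 xs (cfoc_and xs phi psi).
Proof.
move=> uxs xsV [Cphi fvE1 sub1] [Cpsi fvE2 sub2] xsE.
have fvE : xs =i fv phi ++ fv psi by move=> x; rewrite xsE !mem_cat fvE1 fvE2.
split=> [|x|x]; first exact: CFOC_and.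
  by rewrite /= mem_cat -fvE -mem_cat mem_cat_sub //; apply: fv_clique.
by rewrite /= !mem_cat => /orP[/vars_clique/xsV|/orP[/sub1|/sub2]].
Qed.

Lemma cfoc3_cnt xs k y phi : uniq (y :: xs) -> {subset xs <= V3} -> cfoc3 (y :: xs) phi ->
  0 < k -> cfoc3 xs (cfoc_cnt xs k y phi).
Proof.
move=> uyxs xsV [Cphi fvE sub] k_pos; have /andP[yxs _] := uyxs.
split=> [|x|x]; first exact: CFOC_cnt.
  rewrite /= mem_cat mem_filter fvE in_cons /=; case: (eqVneq x y) => [->|_] /=.
    by rewrite (negbTE yxs) orbF; apply/negbTE/negP => /fv_clique; apply/negP.
  by rewrite -mem_cat mem_cat_sub //; apply: fv_clique.
rewrite /= mem_cat in_cons => /orP[/vars_clique/xsV|/orP[/eqP->|/sub]] //.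
by apply/sub/fv_vars; rewrite fvE mem_head.
Qed.

Lemma cfoc3_exactly xs m y phi : uniq (y :: xs) -> {subset xs <= V3} -> cfoc3 (y :: xs) phi ->
  cfoc3 xs (cfoc_exactly xs m y phi).
Proof.
move=> uyxs xsV phi3; have /andP[_ uxs] := uyxs.
case: m => [|m]; first by apply: cfoc3_not => //; apply: cfoc3_cnt.
apply: (cfoc3_and (X := xs) (Y := xs)) => //; first exact: cfoc3_cnt.
  by apply: cfoc3_not => //; apply: cfoc3_cnt.
by move=> x; rewrite mem_cat orbb.
Qed.

Lemma cfoc3_all xs fs : uniq xs -> {subset xs <= V3} -> cfoc3 xs (clique xs) ->
  List.Forall (fun f => exists2 X, cfoc3 X f & {subset X <= xs}) fs ->
  cfoc3 xs (cfoc_all xs fs).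
Proof.
move=> uxs xsV clique3; elim=> //= f {}fs [X f3 sXxs] _ fs3.
by apply: (cfoc3_and (X := X) (Y := xs)) => // x; rewrite mem_cat_sub.
Qed.

(* For distinct [x, y] in [V3], the remaining variable. *)
Definition third (x y : nat) : nat := 3 - (x + y).

Lemma third_V3 x y : x != y -> x \in V3 -> y \in V3 ->
  [/\ third x y \in V3, x != third x y & y != third x y].
Proof.
move=> nxy; rewrite !inE => /or3P[]/eqP xE /or3P[]/eqP yE; move: nxy; rewrite xE yE //.
Qed.

Section Semantics.
Variables (T : finType) (e : rel T).

Lemma sat_cfoc_exactly a xs m y phi : sat e a (cfoc_exactly xs m y phi) =
  sat e a (clique xs) && (#|[pred w | sat e (upd a y w) phi]| == m).
Proof.
case: m => [|m] /=; case: (sat e a (clique xs)) => //=; first by rewrite lt0n negbK.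
by rewrite -ltnNge eqn_leq andbC.
Qed.

Lemma sat_cfoc_all a xs fs : sat e a (cfoc_all xs fs) = sat e a (clique xs) && all (sat e a) fs.
Proof.
elim: fs => [|f fs IH] /=; first by rewrite andbT.
by rewrite IH; case: (sat e a (clique xs)); rewrite ?andbF.
Qed.

Lemma all_sat_exactly a xs z (A : eqType) (dom : seq A) (f : A -> color) (phi : A -> fo)
    (s t : seq color) :
  sat e a (clique xs) -> {subset s <= map f dom} -> {subset t <= map f dom} ->
  (forall d, d \in dom -> #|[pred w | sat e (upd a z w) (phi d)]| = count_mem (f d) s) ->
  all (sat e a) [seq cfoc_exactly xs (count_mem (f d) t) z (phi d) | d <- dom] = perm_eq s t.
Proof.
move=> sat_xs sub_s sub_t card_phi; rewrite -(perm_eq_counts sub_s sub_t) all_map.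
by apply: eq_in_all => d dom_d; rewrite /= sat_cfoc_exactly sat_xs card_phi.
Qed.

End Semantics.

Lemma Forall_map (A : Type) (P : fo -> Prop) (g : A -> fo) (s : seq A) :
  (forall d, P (g d)) -> List.Forall P (map g s).
Proof. by move=> Pg; elim: s => //= d s IH; constructor. Qed.

Lemma Forall_cat (P : fo -> Prop) (s t : seq fo) :
  List.Forall P s -> List.Forall P t -> List.Forall P (s ++ t).
Proof. by elim=> //= f s' Pf _ IH Pt; constructor; last exact: IH. Qed.

Definition col_pairs (D : seq color) : seq (color * color) := [seq (d1, d2) | d1 <- D, d2 <- D].

(* [eb_formula D l c x y] expresses [eb^(l)(x, y) = c] with the variables of [V3],
   checking each multiset component of [c] through the multiplicity of every
   level-[l] colour of [D l], the third variable being the counted one. *)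
Fixpoint eb_formula (D : nat -> seq color) (l : nat) (c : color) (x y : nat) : fo :=
  if l is l'.+1 then
    let z := third x y in
    cfoc_all [:: x; y] (eb_formula D l' (col_arg 0 c) x y ::
      [seq cfoc_exactly [:: x] (count_mem d (col_args (col_arg 1 c))) z
             (eb_formula D l' d x z) | d <- D l'] ++
      [seq cfoc_exactly [:: x; y] (count_mem (col_pair d.1 d.2) (col_args (col_arg 2 c))) z
             (cfoc_and [:: x; y; z] (eb_formula D l' d.1 x z) (eb_formula D l' d.2 y z))
         | d <- col_pairs (D l')] ++
      [seq cfoc_exactly [:: y] (count_mem d (col_args (col_arg 3 c))) z
             (eb_formula D l' d y z) | d <- D l'])
  else clique [:: x; y].

Lemma cfoc3_eb_formula D l c x y : x != y -> x \in V3 -> y \in V3 ->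
  cfoc3 [:: x; y] (eb_formula D l c x y).
Proof.
elim: l c x y => [|l IH] c x y nxy xV yV; first exact: cfoc3_clique2.
have [zV nxz nyz] := third_V3 nxy xV yV.
have xyV : {subset [:: x; y] <= V3} by move=> w /predU1P[->|/predU1P[->|]].
have swap w f : cfoc3 [:: w; third x y] f -> cfoc3 [:: third x y; w] f.
  by move=> f3; apply: (cfoc3_eq_fv f3) => v; rewrite !inE orbC.
apply: cfoc3_all; [by rewrite /= inE nxy|exact: xyV|exact: cfoc3_clique2|].
constructor; first by exists [:: x; y]; [exact: IH|].
apply: Forall_cat; [|apply: Forall_cat]; apply: Forall_map => d.
- exists [:: x]; last by move=> w; rewrite inE => /eqP->; rewrite mem_head.
  apply: cfoc3_exactly; [by rewrite /= inE eq_sym nxz|by move=> w; rewrite inE => /eqP->|].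
  exact/swap/IH.
- exists [:: x; y] => //; apply: cfoc3_exactly => //.
    by rewrite /= !inE negb_or !(eq_sym (third x y)) nxz nyz nxy.
  apply: (@cfoc3_eq_fv [:: x; y; third x y]); last first.
    by move=> w; rewrite !inE; case: (w == x); case: (w == y); case: (w == third x y).
  apply: (cfoc3_and (X := [:: x; third x y]) (Y := [:: y; third x y])); try exact: IH.
  + by rewrite /= !inE negb_or nxy nxz nyz.
  + by move=> w /predU1P[->|/predU1P[->|/predU1P[->|]]].
  + by move=> w; rewrite !inE; case: (w == x); case: (w == y); case: (w == third x y).
- exists [:: y]; last by move=> w; rewrite inE => /eqP->; rewrite !inE eqxx orbT.
  apply: cfoc3_exactly; [by rewrite /= inE eq_sym nyz|by move=> w; rewrite inE => /eqP->|].
  exact/swap/IH.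
Qed.

Section Definability.
Variable D : nat -> seq color.

Definition covered_by (T : finType) (e : rel T) : Prop := forall l u v, eb e l u v \in D l.

Hypothesis D_realised : forall l c, c \in D l ->
  exists (T : finType) (e : rel T), covered_by e /\ exists u v, c = eb e l u v.

Lemma covered_map (T : finType) (e : rel T) l u (S : {pred T}) : covered_by e ->
  {subset [seq eb e l u w | w <- enum S] <= D l}.
Proof. by move=> cov _ /mapP[w _ ->]. Qed.

Lemma covered_map_pairs (T : finType) (e : rel T) l u v (S : {pred T}) : covered_by e ->
  {subset [seq col_pair (eb e l u w) (eb e l v w) | w <- enum S]
     <= [seq col_pair d.1 d.2 | d <- col_pairs (D l)]}.
Proof.
move=> cov _ /mapP[w _ ->]; apply/mapP; exists (eb e l u w, eb e l v w) => //.
exact: allpairs_f.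
Qed.

Variables (T : finType) (e : rel T).
Hypothesis e_covered : covered_by e.

Definition eb_formula_correct l : Prop :=
  forall c x y a u v, c \in D l -> x != y -> x \in V3 -> y \in V3 ->
  a x = Some u -> a y = Some v -> sat e a (eb_formula D l c x y) = e u v && (eb e l u v == c).

Lemma all_sat_nbhd_part l p z a u t : eb_formula_correct l -> p != z -> p \in V3 -> z \in V3 ->
  a p = Some u -> {subset t <= D l} ->
  all (sat e a) [seq cfoc_exactly [:: p] (count_mem d (col_args (col_mset t))) z
                   (eb_formula D l d p z) | d <- D l] =
  perm_eq [seq eb e l u w | w <- enum (nbhd e u)] t.
Proof.
move=> IH npz pV zV au tD; rewrite -(permPr (perm_col_args t)).
apply: (all_sat_exactly (f := id)); rewrite ?map_id //.
- by move=> d /mapP[w _ ->].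
- by move=> d; rewrite mem_sort => /tD.
move=> d dD; rewrite count_map count_enum; apply: eq_card => w; rewrite !inE.
by rewrite (IH d p z _ u w dD npz pV zV) // /upd ?eqxx // (negbTE npz).
Qed.

Section Step.
Variables (l : nat) (x y : nat) (a : nat -> option T) (u v : T).
Hypotheses (IH : eb_formula_correct l) (nxy : x != y) (xV : x \in V3) (yV : y \in V3).
Hypotheses (au : a x = Some u) (av : a y = Some v).

Let z := third x y.

Lemma upd_third w : [/\ upd a z w x = Some u, upd a z w y = Some v & upd a z w z = Some w].
Proof. by have [_ nxz nyz] := third_V3 nxy xV yV; rewrite /upd eqxx (negbTE nxz) (negbTE nyz). Qed.

Lemma all_sat_common_part t : e u v ->
  {subset t <= [seq col_pair d.1 d.2 | d <- col_pairs (D l)]} ->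
  all (sat e a) [seq cfoc_exactly [:: x; y] (count_mem (col_pair d.1 d.2) (col_args (col_mset t))) z
                   (cfoc_and [:: x; y; z] (eb_formula D l d.1 x z) (eb_formula D l d.2 y z))
                | d <- col_pairs (D l)] =
  perm_eq [seq col_pair (eb e l u w) (eb e l v w) | w <- enum (nbhd e u :&: nbhd e v)] t.
Proof.
move=> euv tD; have [zV nxz nyz] := third_V3 nxy xV yV.
rewrite -(permPr (perm_col_args t)); apply: all_sat_exactly.
- by rewrite /= au av.
- exact: covered_map_pairs.
- by move=> d; rewrite mem_sort => /tD.
move=> d /allpairsP[[d1 d2] [d1D d2D ->]] /=.
rewrite count_map count_enum; apply: eq_card => w; rewrite !inE col_pair_eq.
have [ax ay az] := upd_third w; rewrite /cfoc_and [sat _ _ _]/= ax ay az euv.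
by rewrite (IH d1D nxz xV zV ax az) (IH d2D nyz yV zV ay az); case: (e u w); case: (e v w).
Qed.

Lemma eb_formula_correctS c : c \in D l.+1 ->
  sat e a (eb_formula D l.+1 c x y) = e u v && (eb e l.+1 u v == c).
Proof.
case/D_realised=> [T' [e' [e'_cov [u0 [v0 ->]]]]].
have [zV nxz nyz] := third_V3 nxy xV yV.
cbn [eb]; cbn [eb_formula]; rewrite sat_cfoc_all [sat _ _ (clique _)]/= au av.
case: (boolP (e u v)) => euv; rewrite ?andFb ?andTb //.
rewrite -cat1s !all_cat all_seq1 [col_arg 0 _]/= (IH (e'_cov l u0 v0) nxy xV yV au av) euv.
rewrite andTb col_tuple_eq !eq_col_mset.
rewrite [col_arg 1 _]/= [col_arg 2 _]/= [col_arg 3 _]/=.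
rewrite (all_sat_nbhd_part IH nxz xV zV au) ?(all_sat_nbhd_part IH nyz yV zV av)
        ?all_sat_common_part //; by [apply: covered_map | apply: covered_map_pairs].
Qed.

End Step.

Lemma sat_eb_formula l : eb_formula_correct l.
Proof.
elim: l => [|l IH] c x y a u v cD nxy xV yV au av; last exact: eb_formula_correctS.
by have [T' [e' [_ [u0 [v0 ->]]]]] := D_realised cD; rewrite /= au av andbT.
Qed.

End Definability.

Lemma sum_perm_map (T1 T2 : finType) (g1 : T1 -> nat) (g2 : T2 -> nat) :
  perm_eq (map g1 (enum T1)) (map g2 (enum T2)) -> \sum_u g1 u = \sum_u g2 u.
Proof.
move=> /(perm_big _ (op := addn) (x := 0) (P := xpredT) (F := id)).
by rewrite !big_map -!enumT !big_enum.
Qed.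

Lemma cfoc3_sentence f : cfoc3 [::] f -> CFOC3 f /\ sentence f.
Proof.
case=> Cf fvE sub; split; first split => //.
  apply: (@leq_trans (size V3)) => //.
  by apply: uniq_leq_size => [|x]; rewrite ?undup_uniq // mem_undup => /sub.
by rewrite /sentence; case: (fv f) fvE => // x s /(_ x); rewrite mem_head.
Qed.

Section Forward.
Variables (T1 T2 : finType) (e1 : rel T1) (e2 : rel T2).

Lemma CFOC3_distinguishable_count psi : cfoc3 [:: 0] psi ->
  #|[pred u | sat e1 (upd (fun _ => None) 0 u) psi]| !=
  #|[pred u | sat e2 (upd (fun _ => None) 0 u) psi]| ->
  CFOC3_distinguishable e1 e2.
Proof.
move=> psi3; set n1 := #|_|; set n2 := #|_| => n12.
have models_cnt (T : finType) (e : rel T) k : models e (cfoc_cnt [::] k 0 psi) =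
    (k <= #|[pred u | sat e (upd (fun _ => None) 0 u) psi]|) by [].
have models_not (T : finType) (e : rel T) f : models e (cfoc_not [::] f) = ~~ models e f by [].
have cnt3 k : 0 < k -> cfoc3 [::] (cfoc_cnt [::] k 0 psi) by move=> k_pos; apply: cfoc3_cnt.
have not3 f : cfoc3 [::] f -> cfoc3 [::] (cfoc_not [::] f) by apply: cfoc3_not.
case: (ltngtP n1 n2) => [lt12|lt21|eq12]; last by rewrite eq12 eqxx in n12.
- have [C sen] := cfoc3_sentence (not3 _ (cnt3 _ (leq_ltn_trans (leq0n _) lt12))).
  exists (cfoc_not [::] (cfoc_cnt [::] n2 0 psi)); do 2!split=> //.
  by rewrite !models_not !models_cnt -ltnNge lt12 leqnn.
- have [C sen] := cfoc3_sentence (cnt3 _ (leq_ltn_trans (leq0n _) lt21)).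
  exists (cfoc_cnt [::] n1 0 psi); do 2!split=> //.
  by rewrite !models_cnt leqnn -ltnNge lt21.
Qed.

Lemma CFOC3_distinguishable_size : simple_graph_noiso e1 -> simple_graph_noiso e2 ->
  #|T1| <> #|T2| -> CFOC3_distinguishable e1 e2.
Proof.
move=> [sym1 [_ noiso1]] [sym2 [_ noiso2]] /eqP card12.
pose has_nbr := cfoc_cnt [:: 0] 1 1 (clique [:: 1; 0]).
have card_has_nbr (T : finType) (e : rel T) : symmetric e -> (forall v, exists w, e v w) ->
    #|[pred u | sat e (upd (fun _ => None) 0 u) has_nbr]| = #|T|.
  move=> e_sym noiso; rewrite cardT; apply: eq_cardT => u; rewrite !inE.
  by have [w euw] := noiso u; apply/card_gt0P; exists w; rewrite inE /= e_sym.
apply: (@CFOC3_distinguishable_count has_nbr); last by rewrite !card_has_nbr.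
by apply: cfoc3_cnt => // [x|]; [rewrite inE => /eqP-> | apply: cfoc3_clique2].
Qed.

Definition colors_of l : seq color :=
  [seq eb e1 l p.1 p.2 | p : T1 * T1] ++
  [seq eb e2 l p.1 p.2 | p : T2 * T2].

Lemma covered_colors_of1 : covered_by colors_of e1.
Proof. by move=> l u v; rewrite mem_cat (map_f (fun p => eb e1 l p.1 p.2) (mem_enum _ (u, v))). Qed.

Lemma covered_colors_of2 : covered_by colors_of e2.
Proof. by move=> l u v; rewrite mem_cat (map_f (fun p => eb e2 l p.1 p.2) (mem_enum _ (u, v))) orbT. Qed.

Lemma colors_of_realised l c : c \in colors_of l ->
  exists (T : finType) (e : rel T), covered_by colors_of e /\ exists u v, c = eb e l u v.
Proof.
rewrite mem_cat => /orP[]/mapP[[u v] _ ->].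
  by exists T1, e1; split; [exact: covered_colors_of1|exists u, v].
by exists T2, e2; split; [exact: covered_colors_of2|exists u, v].
Qed.

Lemma CFOC3_distinguishable_level l :
  ~~ perm_eq (ebG e1 l) (ebG e2 l) -> CFOC3_distinguishable e1 e2.
Proof.
case/allPn=> c _ /= count12.
have cD : c \in colors_of l.
  case: (boolP (c \in ebG e1 l)) => [/mapP[p _ ->]|/count_memPn c1].
    exact: covered_colors_of1.
  case: (boolP (c \in ebG e2 l)) => [/mapP[p _ ->]|/count_memPn c2].
    exact: covered_colors_of2.
  by rewrite c1 c2 in count12.
pose deg (T : finType) (e : rel T) u := #|[pred w | e u w && (eb e l u w == c)]|.
have count_deg (T : finType) (e : rel T) : count_mem c (ebG e l) = \sum_u deg T e u.
  by rewrite /ebG count_map; apply: (count_oedges e (fun u w => eb e l u w == c)).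
have /allPn[m _ /= m12] : ~~ perm_eq (map (deg _ e1) (enum T1)) (map (deg _ e2) (enum T2)).
  by apply: contra count12 => /sum_perm_map; rewrite !count_deg => ->.
pose psi := cfoc_exactly [:: 0] m 1 (eb_formula colors_of l c 0 1).
have card_psi (T : finType) (e : rel T) : covered_by colors_of e ->
    #|[pred u | sat e (upd (fun _ => None) 0 u) psi]| = count_mem m (map (deg _ e) (enum T)).
  move=> cov; rewrite count_map count_enum; apply: eq_card => u; rewrite !inE sat_cfoc_exactly.
  congr (_ == m); apply: eq_card => w; rewrite !inE.
  exact: (sat_eb_formula colors_of_realised cov cD (x := 0) (y := 1)).
apply: (@CFOC3_distinguishable_count psi); last first.
  by rewrite (card_psi _ _ covered_colors_of1) (card_psi _ _ covered_colors_of2).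
apply: cfoc3_exactly => // [x|]; first by rewrite inE => /eqP->.
by apply: (cfoc3_eq_fv (cfoc3_eb_formula _ _ _ _ _ _)) => // x; rewrite !inE orbC.
Qed.

Theorem EB_distinguishable_CFOC3 : simple_graph_noiso e1 -> simple_graph_noiso e2 ->
  EB_distinguishable e1 e2 -> CFOC3_distinguishable e1 e2.
Proof.
move=> G1 G2 [card12|[l /CFOC3_distinguishable_level //]].
exact: CFOC3_distinguishable_size.
Qed.

End Forward.

Unset Implicit Arguments.

Theorem mainTheorem5 (T1 T2 : finType) (e1 : rel T1) (e2 : rel T2) :
  simple_graph_noiso e1 -> simple_graph_noiso e2 ->
  (EB_distinguishable e1 e2 <-> CFOC3_distinguishable e1 e2).
Proof.
move=> G1 G2; split; [exact: EB_distinguishable_CFOC3 | exact: CFOC3_distinguishable_EB].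
Qed.
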